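(* Let $N,M\ge 1$ be integers and let $\mathcal H=\mathcal H_+\oplus\mathcal H_-$ with $\mathcal H_+=\mathbb C^N$, $\mathcal H_-=\mathbb C^M$. Let $B$ be a positive semidefinite Hermitian $N\times N$ matrix, $D$ a skew-Hermitian $M\times M$ matrix, and $u$ an $M\times N$ complex matrix that is a partial isometry (i.e. $uu^*u=u$). Let $$\mu=\begin{pmatrix}0 & -Bu^*\\ uB & D\end{pmatrix}.$$ Let $n\ge 1$ and $k$ be integers with $n/2+1<k\le n+1$. Then $$i^{n+1}\big(\mu\, H^{n-1}_{k-1}(\mu)\big)_{--}\,u=0.$$ Consequently, in the system of equations $\frac{\partial}{\partial t^n_k}u=i^{n+1}(\mu H^{n-1}_{k-1}(\mu))_{--}u$, only the times $t^n_k$ with $k\le n/2+1$ give nontrivial evolution.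
   Context: $P_+$ and $P_-$ denote the orthogonal projectors of $\mathcal H$ onto $\mathcal H_+$ and $\mathcal H_-$; for an operator $X$ on $\mathcal H$, $X_{--}$ denotes the block $P_-XP_-$ regarded as an operator on $\mathcal H_-$. For integers $m\ge 0$ and $0\le l\le m+1$ and a matrix $\mu$ on $\mathcal H$, define $$H^m_l(\mu)=\sum_{\substack{i_0,\dots,i_m\in\{0,1\}\\ i_0+\dots+i_m=l}} P_+^{i_0}\mu P_+^{i_1}\mu\cdots\mu P_+^{i_m},$$ with $P_+^0=I$ the identity and $P_+^1=P_+$ (so $H^m_l$ has degree $m$ in $\mu$ and degree $l$ in $P_+$; e.g. $H^0_0=I$, $H^0_1=P_+$). *)

From HB Require Import structures.
From mathcomp Require Import all_boot all_order all_algebra.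
Set Implicit Arguments. Unset Strict Implicit. Unset Printing Implicit Defensive.
Import Order.TTheory GRing.Theory Num.Theory.
Local Open Scope ring_scope.

Section Defs.
Variable C : numClosedFieldType.

Definition ctr {m n} (A : 'M[C]_(m, n)) : 'M[C]_(n, m) := (map_mx Num.conj A)^T.

Definition hermitian_mx {n} (A : 'M[C]_n) : Prop := ctr A = A.
Definition skew_hermitian_mx {n} (A : 'M[C]_n) : Prop := ctr A = - A.
Definition psd_mx {n} (A : 'M[C]_n) : Prop :=
  hermitian_mx A /\ forall v : 'cV[C]_n, 0 <= (ctr v *m A *m v) 0 0.
Definition partial_isometry {m n} (u : 'M[C]_(m, n)) : Prop :=
  u *m ctr u *m u = u.

Definition mu_mx {N M} (B : 'M[C]_N) (D : 'M[C]_M) (u : 'M[C]_(M, N))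
  : 'M[C]_(N + M) := block_mx 0 (- (B *m ctr u)) (u *m B) D.

Definition Pplus {N M} : 'M[C]_(N + M) := block_mx 1%:M 0 0 0.

Definition Ppow {N M} (b : bool) : 'M[C]_(N + M) := if b then Pplus else 1%:M.

(* H^m_l(mu) = sum over i_0..i_m in {0,1} with i_0+...+i_m = l of
   P^{i_0} mu P^{i_1} mu ... mu P^{i_m} *)
Definition Hml {N M} (m l : nat) (mu : 'M[C]_(N + M)) : 'M[C]_(N + M) :=
  \sum_(i : {ffun 'I_m.+1 -> bool} | (\sum_(j < m.+1) nat_of_bool (i j))%N == l)
     (Ppow (i ord0) *m \big[mulmx/1%:M]_(j < m) (mu *m Ppow (i (lift ord0 j)))).

(* X_{--} = P_- X P_- as an operator on H_- *)
Definition minus_block {N M} (X : 'M[C]_(N + M)) : 'M[C]_M := drsubmx X.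
End Defs.

From HB Require Import structures.
From mathcomp Require Import all_boot all_order all_algebra.
From mathcomp Require Import zify.
Import Order.TTheory GRing.Theory Num.Theory.
Local Open Scope ring_scope.

(* The only property of mu that matters is P+ mu P+ = 0 (its upper-left block
   vanishes).  A word
   P^{i_0} mu P^{i_1} ... mu P^{i_m} in which more than half of the m+1 slots
   carry P+ either contains two neighbouring P+ (and vanishes) or ends with P+;
   in both cases it is killed by P- on the right.  Hence H^m_l(mu) P- = 0 for
   2l > m+1, and the lower-right block of mu H^m_l(mu) = mu H^m_l(mu) P- is 0. *)

Section Words.
Variable C : numClosedFieldType.
Variables N M : nat.
Local Notation MX := 'M[C]_(N + M).
Local Notation Pplus := (@Pplus C N M).
Local Notation Ppow := (@Ppow C N M).

Definition Pminus : MX := block_mx 0 0 0 1%:M.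

Lemma Pplus_Pminus : Pplus *m Pminus = 0.
Proof. by rewrite /Pplus /Pminus mulmx_block !(mulmx0, mul0mx, addr0) block_mx0. Qed.

Lemma drsubmx_mulPminus (X : MX) : drsubmx (X *m Pminus) = drsubmx X.
Proof.
rewrite -{1}(submxK X) /Pminus mulmx_block block_mxKdr.
by rewrite !mulmx0 !mulmx1 !add0r.
Qed.

Lemma Pplus_mu_mx_Pplus (B : 'M[C]_N) (D : 'M[C]_M) (u : 'M[C]_(M, N)) :
  Pplus *m mu_mx B D u *m Pplus = 0.
Proof.
by rewrite /Pplus /mu_mx !mulmx_block !(mulmx0, mul0mx, mulmx1, mul1mx, addr0) block_mx0.
Qed.

Definition fbehead {m} (i : {ffun 'I_m.+2 -> bool}) : {ffun 'I_m.+1 -> bool} :=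
  [ffun j => i (lift ord0 j)].

Definition weight {m} (i : {ffun 'I_m.+1 -> bool}) : nat :=
  (\sum_(j < m.+1) nat_of_bool (i j))%N.

Lemma weight_cons m (i : {ffun 'I_m.+2 -> bool}) :
  weight i = (i ord0 + weight (fbehead i))%N.
Proof.
rewrite /weight big_ord_recl; congr (_ + _)%N.
by apply: eq_bigr => j _; rewrite ffunE.
Qed.

Variable mu : MX.
Hypothesis Pplus_mu_Pplus : Pplus *m mu *m Pplus = 0.

Definition word {m} (i : {ffun 'I_m.+1 -> bool}) : MX :=
  Ppow (i ord0) *m \big[mulmx/1%:M]_(j < m) (mu *m Ppow (i (lift ord0 j))).

Lemma Hml_sum_word m l :
  Hml m l mu = \sum_(i : {ffun 'I_m.+1 -> bool} | weight i == l) word i.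
Proof. by []. Qed.

Lemma word_cons m (i : {ffun 'I_m.+2 -> bool}) :
  word i = Ppow (i ord0) *m (mu *m word (fbehead i)).
Proof.
rewrite /word big_ord_recl ffunE !mulmxA; congr (_ *m _).
by apply: eq_bigr => j _; rewrite ffunE.
Qed.

(* The second conjunct is the first one for the word with P+ mu prepended;
   it is what makes the induction on the length go through. *)
Lemma word_mulPminus_eq0 m (i : {ffun 'I_m.+1 -> bool}) :
  ((m.+1 < 2 * weight i)%N -> word i *m Pminus = 0) /\
  ((m.+1 <= 2 * weight i)%N -> Pplus *m mu *m word i *m Pminus = 0).
Proof.
elim: m i => [|m IH] i.
  rewrite /word /weight big_ord0 big_ord1 mulmx1.
  case: (i ord0) => /=; last by split=> ?; lia.
  by split=> _; rewrite ?Pplus_mu_Pplus ?mul0mx -?mulmxA ?Pplus_Pminus.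
have [Htail Hcons_tail] := IH (fbehead i).
rewrite word_cons weight_cons; move: (word _) Htail Hcons_tail => w Htail Hcons_tail.
case: (i ord0) => /=.
- split=> hw.
  + by rewrite mulmxA Hcons_tail //; lia.
  + by rewrite !mulmxA Pplus_mu_Pplus !mul0mx.
- rewrite mul1mx; split=> hw.
  + by rewrite -mulmxA Htail ?mulmx0 //; lia.
  + by rewrite -!mulmxA Htail ?mulmx0 //; lia.
Qed.

Lemma Hml_mulPminus m l : (m.+1 < 2 * l)%N -> Hml m l mu *m Pminus = 0.
Proof.
move=> hml; rewrite Hml_sum_word mulmx_suml big1 // => i /eqP wl.
by case: (word_mulPminus_eq0 m i) => -> //; rewrite wl.
Qed.

End Words.

Theorem proposition2p2 (C : numClosedFieldType) (N M : nat)
  (hN : (1 <= N)%N) (hM : (1 <= M)%N)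
  (B : 'M[C]_N) (D : 'M[C]_M) (u : 'M[C]_(M, N)) :
  psd_mx B -> skew_hermitian_mx D -> partial_isometry u ->
  forall n k : nat, (1 <= n)%N -> (n + 2 < 2 * k)%N -> (k <= n + 1)%N ->
  ('i ^+ (n + 1) *: minus_block (mu_mx B D u *m Hml (n - 1) (k - 1) (mu_mx B D u)))
    *m u = 0.
Proof.
move=> _ _ _ n k hn hk _.
have HPminus : Hml (n - 1) (k - 1) (mu_mx B D u) *m Pminus C N M = 0.
  by apply: Hml_mulPminus; [exact: Pplus_mu_mx_Pplus | lia].
rewrite /minus_block -drsubmx_mulPminus -mulmxA HPminus mulmx0.
by rewrite -(block_mx0 C N M N M) block_mxKdr scaler0 mul0mx.
Qed.
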